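(* Let $R$ be a Bézout domain and let $A,B,C\in R^{n\times n}$ satisfy $ABA=ACA$. If $R_r(A)=R_r(AB)$ and $R_r(B)=R_r(BA)$, then $AB$ is similar to $CA$.
   Context: A Bézout domain is an integral domain in which every finitely generated ideal is principal. For $M\in R^{m\times n}$, $R_r(M)=\{Mx : x\in R^{n\times 1}\}\subseteq R^{m\times 1}$ is the column space of $M$. Two matrices $M,N\in R^{n\times n}$ are similar if $M=S^{-1}NS$ for some invertible $S\in R^{n\times n}$. *)

From HB Require Import structures.
From mathcomp Require Import all_boot all_order all_algebra.
Set Implicit Arguments. Unset Strict Implicit. Unset Printing Implicit Defensive.
Import GRing.Theory.
Local Open Scope ring_scope.

Definition in_ideal_gen (R : comNzRingType) (s : seq R) (x : R) : Prop :=
  exists c : 'I_(size s) -> R, x = \sum_(i < size s) c i * s`_i.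

Definition principal_gen (R : comNzRingType) (s : seq R) : Prop :=
  exists d : R, forall x, in_ideal_gen s x <-> exists r : R, x = r * d.

Definition bezout_domain (R : idomainType) : Prop :=
  forall s : seq R, principal_gen s.

Definition colspace (R : comNzRingType) (m k : nat) (M : 'M[R]_(m, k)) (y : 'cV[R]_m) : Prop :=
  exists x : 'cV[R]_k, y = M *m x.

Definition same_colspace (R : comNzRingType) (m k l : nat)
  (M : 'M[R]_(m, k)) (N : 'M[R]_(m, l)) : Prop :=
  forall y, colspace M y <-> colspace N y.

Definition similar_mx (R : comUnitRingType) (n : nat) (M N : 'M[R]_n) : Prop :=
  exists S : 'M[R]_n, S \in unitmx /\ M = invmx S *m N *m S.

From HB Require Import structures.
From mathcomp Require Import all_boot all_order all_algebra.
Set Implicit Arguments. Unset Strict Implicit. Unset Printing Implicit Defensive.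
Import GRing.Theory.
Local Open Scope ring_scope.

(* Write P := A B and Q := C A. The column-space hypotheses give A = A B X1 and
   B = B A X2, hence P = P^2 X1 X2, Q = Q^2 X2 X1 and A = A Q X2 X1. Over the
   fraction field the first two identities force P and Q to have index at most
   one, so e := P X1 X2 and f := Q X2 X1 are idempotents with P = P e, e A = A
   and Q = f Q = Q f. As P A = A Q, the matrix S := A f + He Yf satisfies
   P S = S Q, where 1 - e = He Ye and 1 - f = Hf Yf with Ye He = Yf Hf = 1.
   Such factorizations through free modules exist because over a Bezout domain
   every column space is free (eliminate row by row using gcds), and both have
   the same rank because e, f and A do. Finally S is invertible, with inverse
   Q (X2 X1)^2 C e + Hf Ye. *)

Lemma colspace_incl_factor (R : comNzRingType) m k l (M : 'M[R]_(m, k)) (N : 'M[R]_(m, l)) :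
  (forall y, colspace M y -> colspace N y) -> exists X : 'M_(l, k), M = N *m X.
Proof.
move=> MN.
have colMN (j : 'I_k) : exists x : 'cV_l, col j M = N *m x.
  by apply: MN; exists (delta_mx j 0); rewrite colE.
have [x ex] := fin_all_exists colMN.
exists (\matrix_(i, j) x j i 0); apply/matrixP=> i j.
have /matrixP/(_ i 0) := ex j; rewrite !mxE => ->.
by apply: eq_bigr => t _; rewrite !mxE.
Qed.

Section BezoutFreeColspace.

Variable R : idomainType.

Definition mx_injective m r (G : 'M[R]_(m, r)) := forall x : 'cV_r, G *m x = 0 -> x = 0.

Definition free_colspace m k (M : 'M[R]_(m, k)) :=
  exists r (G : 'M_(m, r)) (U : 'M_(k, r)) (W : 'M_(r, k)),
    [/\ mx_injective G, G = M *m U & M = G *m W].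

Lemma mx_injectiveP m r p (G : 'M[R]_(m, r)) (X : 'M_(r, p)) :
  mx_injective G -> G *m X = 0 -> X = 0.
Proof.
move=> injG GX; apply/matrixP=> i j.
have /matrixP/(_ i 0) : col j X = 0 by apply: injG; rewrite colE mulmxA GX mul0mx.
by rewrite !mxE.
Qed.

Lemma free_colspace0 k (M : 'M[R]_(0, k)) : free_colspace M.
Proof.
exists 0%N, 0, 0, 0; split; first by move=> x _; apply: flatmx0.
- by apply/matrixP => -[].
- by apply/matrixP => -[].
Qed.

Lemma free_colspace_col0 m k (N : 'M[R]_(m, k)) :
  free_colspace N -> free_colspace (col_mx (0 : 'rV_k) N).
Proof.
move=> [r [G [U [W [injG eG eN]]]]].
exists r, (col_mx 0 G), U, W; split.
- by move=> x; rewrite mul_col_mx mul0mx => /eqP; rewrite col_mx_eq0 eqxx => /eqP/injG.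
- by rewrite mul_col_mx mul0mx eG.
- by rewrite mul_col_mx mul0mx eN.
Qed.

Lemma free_colspace_pivot m k (u : 'rV[R]_k) (N : 'M_(m, k)) (c : 'cV_k) (e : 'rV_k) :
  u = u *m c *m e -> u *m c != 0 -> free_colspace (N - N *m c *m e) ->
  free_colspace (col_mx u N).
Proof.
(* Add the pivot column M c, whose top entry u c is nonzero, to a basis of the
   column space of M - M c e, whose top row vanishes. *)
move=> ue uc_neq0 [r [G [U [W [injG eG eN]]]]].
set M := col_mx u N.
have eM : M - M *m c *m e = col_mx 0 (N - N *m c *m e).
  by rewrite !mul_col_mx opp_col_mx add_col_mx -ue subrr.
exists (1 + r)%N, (row_mx (M *m c) (col_mx 0 G)), (row_mx c ((1%:M - c *m e) *m U)),
  (col_mx e W); split.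
- move=> x; rewrite -[x]vsubmxK mul_row_col /M !mul_col_mx mul0mx add_col_mx.
  move=> /eqP; rewrite col_mx_eq0 => /andP[/eqP top /eqP bot].
  have x0 : usubmx x = 0.
    move: top uc_neq0; rewrite addr0 [u *m c]mx11_scalar mul_scalar_mx => /eqP.
    rewrite scalemx_eq0 => /orP[/eqP -> | /eqP //]; by rewrite raddf0 eqxx.
  by move: bot; rewrite x0 mulmx0 add0r => /injG ->; rewrite col_mx0.
- by rewrite mul_mx_row mulmxA mulmxBr mulmx1 mulmxA eM (mul_col_mx 0) mul0mx eG.
- by rewrite mul_row_col (mul_col_mx 0) mul0mx -eN -eM addrC subrK.
Qed.

Hypothesis bezR : bezout_domain R.

(* u c is a gcd of the entries of u, and e lists the cofactors. *)
Lemma bezout_row k (u : 'rV[R]_k) : exists (c : 'cV_k) (e : 'rV_k), u = u *m c *m e.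
Proof.
pose s := [seq u 0 j | j <- enum 'I_k].
have size_s : size s = k by rewrite size_map size_enum_ord.
have nth_s (j : 'I_k) : s`_j = u 0 j.
  by rewrite (nth_map j) ?size_enum_ord // nth_ord_enum.
have [d ideal_d] := bezR s.
have [c d_comb] : in_ideal_gen s d by apply/ideal_d; exists 1; rewrite mul1r.
have u_div (j : 'I_k) : exists r, u 0 j = r * d.
  apply/ideal_d; rewrite /in_ideal_gen size_s.
  exists (fun i => (i == j)%:R); rewrite (bigD1 j) //= eqxx mul1r nth_s big1 ?addr0 //.
  by move=> i /negbTE ->; rewrite mul0r.
have [e ue] := fin_all_exists u_div.
move: c d_comb; rewrite size_s => c d_comb.
have ucd : (u *m \col_j c j) 0 0 = d.
  by rewrite d_comb mxE; apply: eq_bigr => j _; rewrite mxE nth_s mulrC.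
exists (\col_j c j), (\row_j e j); apply/rowP => j.
by rewrite mxE big_ord1 ucd mxE ue mulrC.
Qed.

Lemma bezout_free_colspace m k (M : 'M[R]_(m, k)) : free_colspace M.
Proof.
elim: m M => [|m IHm]; first exact: free_colspace0.
change (forall M : 'M[R]_(1 + m, k), free_colspace M) => M; rewrite -[M]vsubmxK.
have [c [e ue]] := bezout_row (usubmx M).
have [uc0 | uc_neq0] := eqVneq (usubmx M *m c) 0.
- by rewrite ue uc0 mul0mx; apply/free_colspace_col0/IHm.
- exact: free_colspace_pivot ue uc_neq0 (IHm _).
Qed.

Lemma idempotent_free_factor n (E : 'M[R]_n) : E *m E = E ->
  exists h (H : 'M_(n, h)) (Y : 'M_(h, n)), E = H *m Y /\ Y *m H = 1%:M.
Proof.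
move=> EE; have [r [G [U [W [injG eG eE]]]]] := bezout_free_colspace E.
exists r, G, W; split=> //.
have EG : E *m G = G by rewrite eG mulmxA EE.
apply/eqP; rewrite -subr_eq0; apply/eqP; apply: (mx_injectiveP injG).
by rewrite mulmxBr mulmx1 mulmxA -eE EG subrr.
Qed.

End BezoutFreeColspace.

Section FracRank.

Variable R : idomainType.

Definition frac_rank m n (M : 'M[R]_(m, n)) := \rank (map_mx (@tofrac R) M).

Lemma map_tofrac_mx_inj m n : injective (map_mx (@tofrac R) : 'M_(m, n) -> _).
Proof.
move=> X Y /matrixP XY; apply/matrixP=> i j.
by have /eqP := XY i j; rewrite !mxE tofrac_eq => /eqP.
Qed.

Lemma frac_rankMl m n p (X : 'M[R]_(m, n)) (Y : 'M_(n, p)) :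
  (frac_rank (X *m Y) <= frac_rank X)%N.
Proof. by rewrite /frac_rank map_mxM mxrankM_maxl. Qed.

Lemma frac_rankMr m n p (X : 'M[R]_(m, n)) (Y : 'M_(n, p)) :
  (frac_rank (X *m Y) <= frac_rank Y)%N.
Proof. by rewrite /frac_rank map_mxM mxrankM_maxr. Qed.

Lemma frac_rank_free_factor n h (E : 'M[R]_n) (H : 'M_(n, h)) (Y : 'M_(h, n)) :
  E = H *m Y -> Y *m H = 1%:M -> frac_rank E = h.
Proof.
move=> eE YH; apply/eqP; rewrite eqn_leq; apply/andP; split.
  by rewrite eE (leq_trans (frac_rankMl _ _)) // /frac_rank rank_leq_col.
have {1}<- : frac_rank (Y *m E *m H) = h.
  by rewrite eE mulmxA YH mul1mx YH /frac_rank map_mx1 mxrank1.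
by rewrite (leq_trans (frac_rankMl _ _)) ?frac_rankMr.
Qed.

Lemma frac_rank_idem n (E : 'M[R]_n) : E *m E = E ->
  (frac_rank E + frac_rank (1%:M - E))%N = n.
Proof.
rewrite /frac_rank map_mxB map_mx1 => /(congr1 (map_mx (@tofrac R))).
rewrite map_mxM; set F := map_mx _ E => FF.
apply/eqP; rewrite eqn_leq; apply/andP; split.
  have := mxrank_mul_min F (1%:M - F).
  by rewrite mulmxBr mulmx1 FF subrr mxrank0 leqn0 subn_eq0.
by have := mxrank_add F (1%:M - F); rewrite addrC subrK mxrank1.
Qed.

Lemma frac_rank_compl n (E E' : 'M[R]_n) : E *m E = E -> E' *m E' = E' ->
  frac_rank E = frac_rank E' -> frac_rank (1%:M - E) = frac_rank (1%:M - E').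
Proof.
move=> /frac_rank_idem EE /frac_rank_idem EE' eq_rank.
by apply/eqP; rewrite -(eqn_add2l (frac_rank E)) EE eq_rank EE'.
Qed.

End FracRank.

Lemma group_like_mx_field (F : fieldType) n (M Z : 'M[F]_n) : M = M *m M *m Z ->
  M *m Z *m M = M /\ M *m Z *m Z *m M = M *m Z.
Proof.
move=> eM.
(* Equal ranks make the row spaces of M and M^2 coincide: M = W M^2. *)
have : (\rank M <= \rank (M *m M))%N by rewrite {1}eM mxrankM_maxl.
rewrite (geq_leqif (mxrank_leqif_sup (submxMl M M))) => /submxP[W eW].
have WM : W *m M = M *m Z by rewrite {1}eM !mulmxA -(mulmxA W M M) -eW.
have MZM : M *m Z *m M = M by rewrite -WM -mulmxA -eW.
by split=> //; rewrite -WM -(mulmxA W M Z) -(mulmxA W) MZM.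
Qed.

Lemma group_like_mx (R : idomainType) n (M Z : 'M[R]_n) : M = M *m M *m Z ->
  M *m Z *m M = M /\ M *m Z *m Z *m M = M *m Z.
Proof.
move=> /(congr1 (map_mx (@tofrac R))); rewrite !map_mxM => /group_like_mx_field.
by rewrite -!map_mxM => -[/map_tofrac_mx_inj MZM /map_tofrac_mx_inj MZZM].
Qed.

Lemma similar_mx_of_split (R : comUnitRingType) n h (P Q a L e f : 'M[R]_n)
    (He Hf : 'M_(n, h)) (Ye Yf : 'M_(h, n)) :
  P *m a = a *m Q -> P *m e = P -> e *m a = a ->
  f *m Q = Q -> Q *m f = Q -> L *m a *m f = f ->
  1%:M - e = He *m Ye -> Ye *m He = 1%:M ->
  1%:M - f = Hf *m Yf -> Yf *m Hf = 1%:M ->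
  similar_mx P Q.
Proof.
move=> Pa Pe ea fQ Qf Laf eHY YHe fHY YHf.
have e_He : e *m He = 0.
  by rewrite -[e](subKr 1%:M) eHY mulmxBl mul1mx -mulmxA YHe mulmx1 subrr.
have Ye_a : Ye *m a = 0.
  by rewrite -ea mulmxA -[e](subKr 1%:M) eHY mulmxBr mulmx1 mulmxA YHe mul1mx subrr mul0mx.
have Yf_Q : Yf *m Q = 0.
  by rewrite -fQ mulmxA -[f](subKr 1%:M) fHY mulmxBr mulmx1 mulmxA YHf mul1mx subrr mul0mx.
pose S := a *m f + He *m Yf.
pose T := L *m e + Hf *m Ye.
have P_He : P *m He = 0 by rewrite -Pe -mulmxA e_He mulmx0.
have PS : P *m S = S *m Q.
  by rewrite mulmxDr mulmxDl !mulmxA Pa P_He mul0mx -!mulmxA Qf fQ Yf_Q mulmx0.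
have TS : T *m S = 1%:M.
  rewrite mulmxDl !mulmxDr !mulmxA -(mulmxA L e a) ea Laf -(mulmxA L e He) e_He.
  rewrite -(mulmxA Hf Ye a) Ye_a -(mulmxA Hf Ye He) YHe mulmx1 -fHY !mulmx0 !mul0mx.
  by rewrite addr0 add0r addrC subrK.
have [T_unit _] := mulmx1_unit TS.
have invT : invmx T = S by rewrite -[S]mul1mx -(mulVmx T_unit) -mulmxA TS mulmx1.
exists T; split=> //.
by rewrite invT -PS -mulmxA (mulmx1C TS) mulmx1.
Qed.

Lemma mx_idem_compl (R : pzRingType) n (E : 'M[R]_n) :
  E *m E = E -> (1%:M - E) *m (1%:M - E) = 1%:M - E.
Proof. by move=> EE; rewrite mulmxBl mul1mx mulmxBr mulmx1 EE subrr subr0. Qed.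

Section ProductSimilarity.

Variables (R : idomainType) (n : nat) (A B C X1 X2 : 'M[R]_n).
Hypotheses (eA : A = A *m B *m X1) (eB : B = B *m A *m X2)
  (ABA : A *m B *m A = A *m C *m A).

Local Notation e := (A *m B *m (X1 *m X2)).
Local Notation f := (C *m A *m (X2 *m X1)).

Lemma AB_sq_factor : A *m B = A *m B *m (A *m B) *m (X1 *m X2).
Proof.
rewrite -!mulmxA; congr (A *m _); rewrite {1}eB -!mulmxA; congr (B *m _).
by rewrite {1}eA -!mulmxA.
Qed.

Lemma A_fix_f : A *m f = A.
Proof. by rewrite !mulmxA -ABA {3}eA {2}eB !mulmxA. Qed.

Lemma CA_sq_factor : C *m A = C *m A *m (C *m A) *m (X2 *m X1).
Proof. by rewrite -[in LHS]A_fix_f !mulmxA. Qed.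

Lemma e_fix_A : e *m A = A.
Proof. by have [PzP _] := group_like_mx AB_sq_factor; rewrite {2}eA mulmxA PzP -eA. Qed.

Lemma e_idem : e *m e = e.
Proof. by have [PzP _] := group_like_mx AB_sq_factor; rewrite mulmxA PzP. Qed.

Lemma f_idem : f *m f = f.
Proof. by have [QwQ _] := group_like_mx CA_sq_factor; rewrite mulmxA QwQ. Qed.

Lemma frac_rank_e_f : frac_rank e = frac_rank f.
Proof.
have rank_eA : frac_rank e = frac_rank A.
  apply/eqP; rewrite eqn_leq; apply/andP; split; first by rewrite -mulmxA frac_rankMl.
  by rewrite -[X in (frac_rank X <= _)%N]e_fix_A frac_rankMl.
have rank_fA : frac_rank f = frac_rank A.
  apply/eqP; rewrite eqn_leq (leq_trans (frac_rankMl _ _)) ?frac_rankMr //=.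
  by rewrite -[X in (frac_rank X <= _)%N]A_fix_f frac_rankMr.
by rewrite rank_eA rank_fA.
Qed.

Lemma similar_AB_CA : bezout_domain R -> similar_mx (A *m B) (C *m A).
Proof.
move=> bezR.
have [he [He [Ye [eHY YHe]]]] := idempotent_free_factor bezR (mx_idem_compl e_idem).
have [hf [Hf [Yf [fHY YHf]]]] := idempotent_free_factor bezR (mx_idem_compl f_idem).
have he_hf : he = hf.
  rewrite -(frac_rank_free_factor eHY YHe) -(frac_rank_free_factor fHY YHf).
  exact: frac_rank_compl e_idem f_idem frac_rank_e_f.
subst hf; pose L := C *m A *m (X2 *m X1) *m (X2 *m X1) *m C.
apply: (similar_mx_of_split (a := A) (L := L) _ _ _ _ _ _ eHY YHe fHY YHf).
- by rewrite !mulmxA ABA.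
- by rewrite (mulmxA (A *m B) (A *m B)) -AB_sq_factor.
- exact: e_fix_A.
- by have [QwQ _] := group_like_mx CA_sq_factor.
- by rewrite (mulmxA (C *m A) (C *m A)) -CA_sq_factor.
- have [_ QwwQ] := group_like_mx CA_sq_factor.
  rewrite /L -(mulmxA _ C A) -(mulmxA _ (C *m A)) (mulmxA (C *m A) (C *m A)).
  by rewrite -CA_sq_factor QwwQ.
Qed.

End ProductSimilarity.

Theorem corollary2p3 (R : idomainType) (n : nat) (A B C : 'M[R]_n) :
  bezout_domain R ->
  A *m B *m A = A *m C *m A ->
  same_colspace A (A *m B) ->
  same_colspace B (B *m A) ->
  similar_mx (A *m B) (C *m A).
Proof.
move=> bezR ABA colA colB.
have [X1 eA] := colspace_incl_factor (fun y => (colA y).1).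
have [X2 eB] := colspace_incl_factor (fun y => (colB y).1).
exact: similar_AB_CA eA eB ABA bezR.
Qed.
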